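(* Let $I$ be a finite set. For each tree $T$ on $I$, the interval $[\hat{0},T]$ of the poset $\operatorname{For}(I)$ is a lattice.
   Context: A tree on a finite set $I$ is a (non-planar) rooted binary tree whose leaves are bijectively labeled by $I$: vertices are inner vertices (valence $3$) and leaves and the root (valence $1$), edges oriented towards the root; one-leaf trees are allowed. A forest on $I$ is a set of trees whose leaf sets partition $I$. For forests $F,G$ on $I$, $F \leq G$ if there is a continuous map $F\to G$ which (D1) is increasing with respect to orientation towards the root, (D2) maps inner vertices to inner vertices injectively, (D3) is the identity of $I$ on leaves, (D4) is injective on each tree of $F$. This gives the poset $\operatorname{For}(I)$, whose minimum $\hat{0}$ is the forest without inner vertices. *)

From mathcomp Require Import all_boot.
Set Implicit Arguments. Unset Strict Implicit. Unset Printing Implicit Defensive.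

(* Encoding: a (non-planar, rooted, binary, leaf-labelled) forest on the finite
   set I is represented by its family of clusters: for every vertex v other
   than a root, the set of leaves below v.  Leaves give the singletons [set x],
   inner vertices give the clusters of size >= 2.  Roots (valence 1) are not
   recorded: each tree has exactly one root, sitting above its maximal
   cluster. *)

Section Forests.
Variable I : finType.

Definition laminar (F : {set {set I}}) : Prop :=
  forall A B, A \in F -> B \in F ->
    [\/ A \subset B, B \subset A | [disjoint A & B]].

Definition binary_splits (F : {set {set I}}) : Prop :=
  forall C, C \in F -> 1 < #|C| ->
    exists A B, [/\ A \in F, B \in F, (A != set0) && (B != set0),
                    [disjoint A & B] & A :|: B = C].

Definition is_forest (F : {set {set I}}) : Prop :=
  [/\ set0 \notin F, (forall x : I, [set x] \in F), laminar F & binary_splits F].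

(* a tree on I: a forest consisting of a single tree, i.e. whose leaf set I
   is itself a cluster (its top vertex) *)
Definition is_tree (F : {set {set I}}) : Prop := is_forest F /\ [set: I] \in F.

Definition inner (F : {set {set I}}) (C : {set I}) : bool := (C \in F) && (1 < #|C|).

Definition child (F : {set {set I}}) (C D : {set I}) : Prop :=
  [/\ C \in F, D \in F, C \proper D &
      forall K, K \in F -> C \proper K -> ~ K \proper D].

(* F <= G : combinatorial form of a map F -> G satisfying (D1)-(D4).
   phi gives the image of each non-root vertex of F (a vertex of G); the map on
   edges is then the unique monotone path between the images.  The images of
   the roots of F can always be chosen just above the image of the top vertex,
   so they impose no condition. *)
Definition forest_le (F G : {set {set I}}) : Prop :=
  exists phi : {set I} -> {set I},
    [/\ (forall C, C \in F -> phi C \in G) /\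
        (forall x : I, phi [set x] = [set x]),
        (forall C, inner F C -> inner G (phi C)),
        (forall C D, inner F C -> inner F D -> phi C = phi D -> C = D),
        (* (D1) increasing towards the root (strictly, as injective on edges) *)
        (forall C D, child F C D -> phi C \proper phi D) &
        (* (D4) injective on each tree: the two children of an inner vertex
           are sent into different branches below the image of the vertex *)
        (forall D C1 C2, child F C1 D -> child F C2 D -> C1 != C2 ->
           ~ exists K, [/\ K \in G, K \proper phi D &
                           (phi C1 :|: phi C2) \subset K])].

Definition forest0 : {set {set I}} := [set [set x] | x : I].

Definition in_interval (T F : {set {set I}}) : Prop :=
  is_forest F /\ forest_le forest0 F /\ forest_le F T.

Definition is_lattice_on (X : Type) (le : X -> X -> Prop) (P : X -> Prop) : Prop :=
  forall a b, P a -> P b ->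
    (exists j, [/\ P j, le a j, le b j &
                   forall u, P u -> le a u -> le b u -> le j u]) /\
    (exists m, [/\ P m, le m a, le m b &
                   forall l, P l -> le l a -> le l b -> le l m]).

End Forests.

From mathcomp Require Import all_boot.
From Stdlib Require Import Classical.
Set Implicit Arguments. Unset Strict Implicit. Unset Printing Implicit Defensive.

(* A map F -> G witnessing F <= G is forced to send each cluster C of F to its
   hull in G, the least cluster of G containing C.  Hence, for F and G in the
   interval [0^, T], F <= G holds exactly when every cluster of F lies in a
   cluster of G with the same hull in the tree T, and this relation is
   transitive.  The meet of F and G is the forest of nonempty intersections
   E :&: E' of a cluster E of F and a cluster E' of G whose hull in T is that
   of E and of E'.  A finite poset with a top element and binary meets is a
   lattice, joins being meets of all common upper bounds. *)

Section ForestIntervals.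
Variable I : finType.
Implicit Types (F G H : {set {set I}}) (A B C D E K X Y : {set I}).

Definition is_hull G C K : bool :=
  [&& K \in G, C \subset K & [forall K', (K' \in G) && (C \subset K') ==> (K \subset K')]].

(* Junk value C when no member of G contains C. *)
Definition hull G C : {set I} := odflt C [pick K | is_hull G C K].

Lemma is_hullP G C K :
  reflect [/\ K \in G, C \subset K & forall K', K' \in G -> C \subset K' -> K \subset K']
          (is_hull G C K).
Proof.
apply: (iffP and3P) => [[KG CK /forallP minK]|[KG CK minK]]; split => //.
  by move=> K' K'G CK'; have := minK K'; rewrite K'G CK'.
by apply/forallP => K'; apply/implyP => /andP[]; exact: minK.
Qed.

Lemma hull_eq G C K : is_hull G C K -> hull G C = K.
Proof.
have uniq K1 K2 : is_hull G C K1 -> is_hull G C K2 -> K1 = K2.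
  move=> /is_hullP[K1G CK1 min1] /is_hullP[K2G CK2 min2].
  by apply/eqP; rewrite eqEsubset min1 // min2.
move=> hK; rewrite /hull; case: pickP => [K' hK'|/(_ K)]; last by rewrite hK.
exact: uniq hK' hK.
Qed.

Lemma hull_id G C : C \in G -> hull G C = C.
Proof. by move=> CG; apply: hull_eq; apply/is_hullP; split. Qed.

Lemma is_hull_hull G C K :
  laminar G -> C != set0 -> K \in G -> C \subset K -> is_hull G C (hull G C).
Proof.
move=> lamG /set0Pn[x xC] KG CK.
have [K0 /andP[K0G CK0] minK0] :=
  arg_minnP (fun S => #|S|) (P := fun S => (S \in G) && (C \subset S)) (i0 := K)
            (introT andP (conj KG CK)).
suff hK0 : is_hull G C K0 by rewrite (hull_eq hK0).
apply/is_hullP; split => // K' K'G CK'.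
have xK0 : x \in K0 := subsetP CK0 x xC.
case: (lamG K0 K' K0G K'G) => [//|K'K0|dis]; last first.
  by move: (subsetP CK' x xC); rewrite (disjointFr dis xK0).
have leK0 : #|K0| <= #|K'| by apply: minK0; rewrite K'G CK'.
by have /eqP-> : K' == K0 by rewrite eqEcard K'K0 leK0.
Qed.

Lemma forest_neq0 F C : is_forest F -> C \in F -> C != set0.
Proof. by case=> F0 _ _ _ CF; apply: contraNneq F0 => <-. Qed.

Lemma forest_singleton F C : is_forest F -> C \in F -> #|C| <= 1 -> exists x, C = [set x].
Proof. by move=> fF CF le1; apply/cards1P; rewrite eqn_leq le1 card_gt0 (forest_neq0 fF CF). Qed.

Definition splits F D A B : Prop :=
  [/\ A \in F, B \in F, (A != set0) && (B != set0), [disjoint A & B] & A :|: B = D].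

Lemma forest_splits F D : is_forest F -> D \in F -> 1 < #|D| -> exists A B, splits F D A B.
Proof. by case=> _ _ _ bsF DF /(bsF D DF)[A [B [AF BF AB0 dAB UD]]]; exists A, B. Qed.

Lemma splits_sym F D A B : splits F D A B -> splits F D B A.
Proof. by case=> AF BF /andP[A0 B0] dAB UD; split; rewrite ?B0 ?A0 1?disjoint_sym 1?setUC. Qed.

Lemma splits_proper F D A B : splits F D A B -> A \proper D.
Proof.
case=> _ _ /andP[_ /set0Pn[y yB]] dAB <-; apply/properP; split; first exact: subsetUl.
by exists y; rewrite ?inE ?yB ?orbT // (disjointFl dAB yB).
Qed.

Lemma splits_neq F D A B : splits F D A B -> A != B.
Proof.
case=> _ _ /andP[/set0Pn[x xA] _] dAB _; apply/eqP => AB.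
by move: (disjointFr dAB xA); rewrite -AB xA.
Qed.

Lemma splits_child F D A B : laminar F -> D \in F -> splits F D A B -> child F A D.
Proof.
move=> lamF DF spD; have AD := splits_proper spD.
case: spD => AF BF /andP[/set0Pn[x xA] /set0Pn[y yB]] dAB UD.
split=> // K KF AK KD.
case: (lamF K B KF BF) => [KB|BK|dKB].
- by move: (disjointFr dAB xA); rewrite (subsetP KB) // (subsetP (proper_sub AK)).
- have DK : D \subset K by rewrite -UD subUset (proper_sub AK) BK.
  by move: (proper_subn KD); rewrite DK.
- suff KA : K \subset A by move: (proper_subn AK); rewrite KA.
  apply/subsetP => z zK; move: (subsetP (proper_sub KD) z zK).
  by rewrite -UD inE (disjointFr dKB zK) orbF.
Qed.

Lemma child_eq F C C' D x :
  laminar F -> child F C D -> child F C' D -> x \in C -> x \in C' -> C = C'.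
Proof.
move=> lamF [CF _ CD maxC] [C'F _ C'D maxC'] xC xC'.
case: (lamF C C' CF C'F) => [CC'|C'C|dis]; last by rewrite (disjointFr dis xC) in xC'.
  apply/eqP; rewrite eqEproper CC'; apply/negP => CC'p; exact: maxC C'F CC'p C'D.
apply/esym/eqP; rewrite eqEproper C'C; apply/negP => C'Cp; exact: maxC' CF C'Cp CD.
Qed.

Lemma child_split F C D A B : is_forest F -> child F C D -> splits F D A B -> C = A \/ C = B.
Proof.
move=> fF chC spD; have [_ _ lamF _] := fF; have [CF DF CD _] := chC.
have /set0Pn[x xC] := forest_neq0 fF CF.
have [_ _ _ _ UD] := spD.
move: (subsetP (proper_sub CD) x xC); rewrite -UD inE => /orP[xA|xB].
  by left; apply: child_eq lamF chC (splits_child lamF DF spD) xC xA.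
by right; apply: child_eq lamF chC (splits_child lamF DF (splits_sym spD)) xC xB.
Qed.

Lemma child_setU F C1 C2 D :
  is_forest F -> child F C1 D -> child F C2 D -> C1 != C2 -> C1 :|: C2 = D.
Proof.
move=> fF ch1 ch2 C12; have [C1F DF C1D _] := ch1.
have D1 : 1 < #|D|.
  by apply: leq_trans (proper_card C1D); rewrite ltnS card_gt0 (forest_neq0 fF C1F).
have [A [B spD]] := forest_splits fF DF D1; have [_ _ _ _ UD] := spD.
move: C12; case: (child_split fF ch1 spD) => ->; case: (child_split fF ch2 spD) => ->;
  by rewrite ?eqxx // setUC.
Qed.

Section ForestMap.
Variables (F G : {set {set I}}) (phi : {set I} -> {set I}).
Hypotheses (forest_F : is_forest F) (forest_G : is_forest G).
Hypothesis phi_mem : forall C, C \in F -> phi C \in G.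
Hypothesis phi_leaf : forall x, phi [set x] = [set x].
Hypothesis phi_child : forall C D, child F C D -> phi C \proper phi D.
Hypothesis phi_branch : forall D C1 C2, child F C1 D -> child F C2 D -> C1 != C2 ->
  ~ exists K, [/\ K \in G, K \proper phi D & phi C1 :|: phi C2 \subset K].

Lemma sub_phi C : C \in F -> C \subset phi C.
Proof.
have [_ _ lamF _] := forest_F.
move: {2}#|C| (leqnn #|C|) => n; elim: n C => [|n IH] C leCn CF.
  by move: (forest_neq0 forest_F CF); rewrite -card_gt0; case: #|C| leCn.
have [le1|gt1] := leqP #|C| 1.
  by have [x ->] := forest_singleton forest_F CF le1; rewrite phi_leaf.
have sub_child A B : splits F C A B -> A \subset phi C.
  move=> spC; have [AF _ _ _ _] := spC.
  have leAn : #|A| <= n by rewrite -ltnS (leq_trans (proper_card (splits_proper spC))).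
  exact: subset_trans (IH A leAn AF) (proper_sub (phi_child (splits_child lamF CF spC))).
have [A [B spC]] := forest_splits forest_F CF gt1; have [_ _ _ _ UC] := spC.
by rewrite -{1}UC subUset (sub_child _ _ spC) (sub_child _ _ (splits_sym spC)).
Qed.

Lemma phi_splits_disjoint D A B : D \in F -> splits F D A B -> [disjoint phi A & phi B].
Proof.
move=> DF spD; have [_ _ lamF _] := forest_F; have [_ _ lamG _] := forest_G.
have [AF BF _ _ _] := spD.
have chA := splits_child lamF DF spD; have chB := splits_child lamF DF (splits_sym spD).
have nb := phi_branch chA chB (splits_neq spD).
case: (lamG _ _ (phi_mem AF) (phi_mem BF)) => [AB|BA|//]; exfalso; apply: nb.
  by exists (phi B); split; [exact: phi_mem | exact: phi_child | rewrite subUset AB subxx].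
by exists (phi A); split; [exact: phi_mem | exact: phi_child | rewrite subUset BA subxx].
Qed.

Lemma splits_phi_sub D A B K :
  D \in F -> splits F D A B -> K \in G -> D \subset K -> phi A \subset K.
Proof.
move=> DF spD KG DK; have [_ _ lamG _] := forest_G.
have dis := phi_splits_disjoint DF spD.
have [AF BF /andP[/set0Pn[a aA] /set0Pn[b bB]] _ UD] := spD.
have inK y : y \in D -> y \in K by apply: subsetP.
have aK : a \in K by rewrite inK // -UD inE aA.
have bK : b \in K by rewrite inK // -UD inE bB orbT.
have aA' : a \in phi A := subsetP (sub_phi AF) a aA.
have bB' : b \in phi B := subsetP (sub_phi BF) b bB.
case: (lamG K (phi A) KG (phi_mem AF)) => [KA|//|dKA].
  by move: (disjointFr dis (subsetP KA b bK)); rewrite bB'.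
by rewrite (disjointFr dKA aK) in aA'.
Qed.

Lemma phi_is_hull C : C \in F -> is_hull G C (phi C).
Proof.
move=> CF; apply/is_hullP; split; [exact: phi_mem | exact: sub_phi |] => K KG CK.
have [le1|gt1] := leqP #|C| 1.
  by have [x eC] := forest_singleton forest_F CF le1; rewrite eC phi_leaf -eC.
have [A [B spC]] := forest_splits forest_F CF gt1.
have [_ _ lamF _] := forest_F; have [_ _ lamG _] := forest_G.
have /set0Pn[x xC] := forest_neq0 forest_F CF.
case: (lamG K (phi C) KG (phi_mem CF)) => [KC|//|dis]; last first.
  by move: (subsetP (sub_phi CF) x xC); rewrite (disjointFr dis (subsetP CK x xC)).
apply/negPn/negP => nCK.
case: (phi_branch (splits_child lamF CF spC) (splits_child lamF CF (splits_sym spC))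
                  (splits_neq spC)).
exists K; split; rewrite ?properE ?KC //.
by rewrite subUset (splits_phi_sub CF spC KG CK) (splits_phi_sub CF (splits_sym spC) KG CK).
Qed.

End ForestMap.

Lemma forest_le_hull F G : is_forest F -> is_forest G -> forest_le F G ->
  [/\ forall C, C \in F -> is_hull G C (hull G C),
      forall C D, inner F C -> inner F D -> hull G C = hull G D -> C = D &
      forall D A B, D \in F -> splits F D A B -> [disjoint hull G A & hull G B]].
Proof.
move=> fF fG [phi [[phi_mem phi_leaf] _ phi_inj phi_child phi_branch]].
have phi_hull := phi_is_hull fF fG phi_mem phi_leaf phi_child phi_branch.
have hullE C : C \in F -> hull G C = phi C by move=> CF; apply/hull_eq/phi_hull.
split=> [C CF | C D iC iD | D A B DF spD].
- by rewrite hullE //; apply: phi_hull.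
- by rewrite !hullE ?(andP iC).1 ?(andP iD).1 //; apply: phi_inj.
- have [AF BF _ _ _] := spD; rewrite !hullE //.
  exact (phi_splits_disjoint fF fG phi_mem phi_child phi_branch DF spD).
Qed.

Lemma hull_forest_le F G : is_forest F -> is_forest G ->
  (forall C, C \in F -> exists2 K, K \in G & C \subset K) ->
  (forall C D, inner F C -> inner F D -> hull G C = hull G D -> C = D) ->
  (forall C D, C \in F -> D \in F -> C \proper D -> hull G C != hull G D) ->
  forest_le F G.
Proof.
move=> fF fG covered inj strict; have [_ G1 lamG _] := fG.
have hullF C : C \in F -> is_hull G C (hull G C).
  move=> CF; have [K KG CK] := covered C CF.
  exact: is_hull_hull lamG (forest_neq0 fF CF) KG CK.
exists (hull G); split => //.
- split=> [C CF | x]; last by rewrite hull_id.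
  by have /is_hullP[] := hullF C CF.
- move=> C /andP[CF C1]; have /is_hullP[KG CK _] := hullF C CF.
  by rewrite /inner KG (leq_trans C1 (subset_leq_card CK)).
- move=> C D [CF DF CD _]; rewrite properEneq strict //.
  have /is_hullP[_ _ minC] := hullF C CF; have /is_hullP[DG DK _] := hullF D DF.
  exact: minC DG (subset_trans (proper_sub CD) DK).
- move=> D C1 C2 ch1 ch2 C12 [K [KG KD C12K]].
  have [C1F DF _ _] := ch1; have [C2F _ _ _] := ch2.
  have /is_hullP[_ _ minD] := hullF D DF.
  have /is_hullP[_ C1K1 _] := hullF C1 C1F; have /is_hullP[_ C2K2 _] := hullF C2 C2F.
  have DK : D \subset K.
    by rewrite -(child_setU fF ch1 ch2 C12); apply: subset_trans (setUSS C1K1 C2K2) C12K.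
  by move: (proper_subn KD); rewrite minD.
Qed.

Lemma forest0_le F : is_forest F -> forest_le (forest0 I) F.
Proof.
case=> _ F1 _ _.
have leaf C : C \in forest0 I -> exists x, C = [set x] by case/imsetP=> x _ ->; exists x.
have no_proper C D : C \in forest0 I -> D \in forest0 I -> ~ C \proper D.
  by move=> /leaf[x ->] /leaf[y ->] /proper_card; rewrite !cards1.
exists id; split.
- by split=> // C /leaf[x ->].
- by move=> C /andP[/leaf[x ->]]; rewrite cards1.
- by move=> C D /andP[/leaf[x ->]]; rewrite cards1.
- by move=> C D [CF DF CD _]; case: (no_proper C D CF DF CD).
- by move=> D C1 C2 [CF DF CD _]; case: (no_proper C1 D CF DF CD).
Qed.

Section Interval.
Variable T : {set {set I}}.
Hypothesis tree_T : is_tree T.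

Lemma is_hullT C : C != set0 -> is_hull T C (hull T C).
Proof. by have [[_ _ lamT _] TT] := tree_T => C0; apply: is_hull_hull lamT C0 TT (subsetT C). Qed.

Lemma hullT_mem C : C != set0 -> hull T C \in T.
Proof. by move=> /is_hullT/is_hullP[]. Qed.

Lemma sub_hullT C : C != set0 -> C \subset hull T C.
Proof. by move=> /is_hullT/is_hullP[]. Qed.

Lemma hullT_min C K : C != set0 -> K \in T -> C \subset K -> hull T C \subset K.
Proof. by move=> /is_hullT/is_hullP[_ _]; apply. Qed.

Lemma hullT_mono C D : C != set0 -> C \subset D -> hull T C \subset hull T D.
Proof.
move=> C0 CD; have D0 := subset_neq0 CD C0.
by apply: hullT_min (hullT_mem D0) (subset_trans CD (sub_hullT D0)).
Qed.

Lemma hullT_squeeze C X K :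
  C != set0 -> C \subset X -> X \subset K -> hull T K = hull T C -> hull T X = hull T C.
Proof.
move=> C0 CX XK KC; apply/eqP; rewrite eqEsubset (hullT_mono C0 CX) andbT -KC.
exact: hullT_mono (subset_neq0 CX C0) XK.
Qed.

Lemma hullT_subset_of_meets A B Y y z : [disjoint hull T A & hull T B] ->
  y \in Y -> y \in A -> z \in Y -> z \in B -> hull T A \subset hull T Y.
Proof.
move=> dAB yY yA zY zB; have [[_ _ lamT _] _] := tree_T.
have A0 : A != set0 by apply/set0Pn; exists y.
have B0 : B != set0 by apply/set0Pn; exists z.
have Y0 : Y != set0 by apply/set0Pn; exists y.
have yA' := subsetP (sub_hullT A0) y yA; have yY' := subsetP (sub_hullT Y0) y yY.
case: (lamT _ _ (hullT_mem A0) (hullT_mem Y0)) => [//|YA|dis].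
  have zA' := subsetP YA z (subsetP (sub_hullT Y0) z zY).
  by move: (subsetP (sub_hullT B0) z zB); rewrite (disjointFr dAB zA').
by rewrite (disjointFr dis yA') in yY'.
Qed.

Definition hull_injective F : Prop :=
  forall C D, inner F C -> inner F D -> hull T C = hull T D -> C = D.

Lemma hullT_proper F C D : is_forest F -> hull_injective F ->
  C \in F -> D \in F -> C \proper D -> hull T C != hull T D.
Proof.
move=> fF injF CF DF CD; apply/eqP => CDT.
have [le1|gt1] := leqP #|C| 1.
  have [x eC] := forest_singleton fF CF le1.
  have [[_ T1 _ _] _] := tree_T.
  have CT : C \in T by rewrite eC T1.
  have DC : D \subset C by rewrite -(hull_id CT) CDT sub_hullT // (forest_neq0 fF DF).
  by move: (proper_subn CD); rewrite DC.
have gt1' : 1 < #|D| := leq_trans gt1 (ltnW (proper_card CD)).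
have eCD : C = D by apply: injF; rewrite /inner ?CF ?DF.
by move: CD; rewrite eCD properxx.
Qed.

Lemma interval_hull_injective F : in_interval T F -> hull_injective F.
Proof.
have [fT _] := tree_T => -[fF [_ leFT]].
by have [_ injF _] := forest_le_hull fF fT leFT.
Qed.

Lemma interval_splits_disjoint F D A B : in_interval T F -> D \in F -> splits F D A B ->
  [disjoint hull T A & hull T B].
Proof.
have [fT _] := tree_T => -[fF [_ leFT]].
by have [_ _ disF] := forest_le_hull fF fT leFT; apply: disF.
Qed.

(* If Y met both A and B, the disjoint hulls of A and B would both lie under
   hull T Y, and then so would K. *)
Lemma interval_split_side F K A B Y : in_interval T F -> K \in F -> splits F K A B ->
  Y != set0 -> hull T Y \proper hull T K -> Y :&: K \subset A \/ Y :&: K \subset B.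
Proof.
move=> hF KF spK Y0 YK; have [fF _] := hF.
have dAB := interval_splits_disjoint hF KF spK.
have [_ _ /andP[A0 B0] _ UK] := spK.
have YKE : Y :&: K = (Y :&: A) :|: (Y :&: B) by rewrite -setIUr UK.
have [YA0|/set0Pn[y /setIP[yY yA]]] := eqVneq (Y :&: A) set0.
  by right; rewrite YKE YA0 set0U subsetIr.
have [YB0|/set0Pn[z /setIP[zY zB]]] := eqVneq (Y :&: B) set0.
  by left; rewrite YKE YB0 setU0 subsetIr.
have dBA : [disjoint hull T B & hull T A] by rewrite disjoint_sym.
have KY : K \subset hull T Y.
  rewrite -UK subUset (subset_trans (sub_hullT A0) (hullT_subset_of_meets dAB yY yA zY zB)).
  exact: subset_trans (sub_hullT B0) (hullT_subset_of_meets dBA zY zB yY yA).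
by move: (proper_subn YK); rewrite hullT_min ?hullT_mem ?(forest_neq0 fF KF).
Qed.

Lemma interval_shrink F C Y : in_interval T F -> C \in F ->
  Y != set0 -> Y \subset C -> hull T Y != hull T C ->
  exists A, [/\ A \in F, A \proper C & Y \subset A].
Proof.
move=> hF CF Y0 YC YCT; have [fF _] := hF.
have [le1|gt1] := leqP #|C| 1.
  have [x eC] := forest_singleton fF CF le1.
  suff eYC : Y = C by rewrite eYC eqxx in YCT.
  by apply/eqP; rewrite eqEcard YC eC cards1 card_gt0.
have [A [B spC]] := forest_splits fF CF gt1; have [AF BF _ _ _] := spC.
have YCp : hull T Y \proper hull T C by rewrite properEneq YCT hullT_mono.
have -> : Y = Y :&: C by apply/esym/setIidPl.
case: (interval_split_side hF CF spC Y0 YCp) => [YA|YB].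
  by exists A; split => //; exact: splits_proper spC.
by exists B; split => //; exact: splits_proper (splits_sym spC).
Qed.

Definition refines F G : Prop :=
  forall C, C \in F -> exists K, [/\ K \in G, C \subset K & hull T K = hull T C].

Lemma refines_trans F G H : refines F G -> refines G H -> refines F H.
Proof.
move=> FG GH C CF; have [K [KG CK KC]] := FG C CF; have [K' [K'H KK' K'K]] := GH K KG.
by exists K'; rewrite (subset_trans CK KK') K'K KC.
Qed.

Lemma refines_hull F G C : is_forest F -> is_forest G -> refines F G -> C \in F ->
  is_hull G C (hull G C) /\ hull T (hull G C) = hull T C.
Proof.
move=> fF [_ _ lamG _] FG CF; have [K [KG CK KC]] := FG C CF.
have C0 := forest_neq0 fF CF.
have hC := is_hull_hull lamG C0 KG CK; split => //.
by have /is_hullP[_ CC' minC] := hC; apply: hullT_squeeze C0 CC' (minC K KG CK) KC.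
Qed.

Lemma refines_forest_le F G : is_forest F -> is_forest G -> hull_injective F ->
  refines F G -> forest_le F G.
Proof.
move=> fF fG injF FG.
have hullGT C : C \in F -> hull T (hull G C) = hull T C.
  by move=> CF; case: (refines_hull fF fG FG CF).
apply: hull_forest_le => //.
- by move=> C CF; have [K [KG CK _]] := FG C CF; exists K.
- move=> C D iC iD CD; apply: injF => //.
  by rewrite -(hullGT C (andP iC).1) -(hullGT D (andP iD).1) CD.
- move=> C D CF DF CD; apply: contra_neq (hullT_proper fF injF CF DF CD) => CDG.
  by rewrite -(hullGT C CF) -(hullGT D DF) CDG.
Qed.

Lemma forest_le_refines F G : in_interval T F -> in_interval T G -> forest_le F G ->
  refines F G.
Proof.
move=> hF hG leFG C CF; have [fF _] := hF; have [fG _] := hG.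
have [hullF _ _] := forest_le_hull fF fG leFG.
have /is_hullP[KG CK minK] := hullF C CF.
exists (hull G C); split => //.
have C0 := forest_neq0 fF CF.
apply/esym/eqP/negPn/negP => CKT.
have [A [AG AK CA]] := interval_shrink hG KG C0 CK CKT.
by move: (proper_subn AK); rewrite minK.
Qed.

Lemma interval_forest_le_trans F G H : in_interval T F -> in_interval T G -> in_interval T H ->
  forest_le F G -> forest_le G H -> forest_le F H.
Proof.
move=> hF hG hH FG GH; have [fF _] := hF; have [fH _] := hH.
apply: refines_forest_le (interval_hull_injective hF) _ => //.
exact: refines_trans (forest_le_refines hF hG FG) (forest_le_refines hG hH GH).
Qed.

Lemma interval_top : in_interval T T.
Proof.
have [fT _] := tree_T; split=> //; split; first exact: forest0_le.
apply: refines_forest_le => // [C D /andP[CT _] /andP[DT _]|C CT]; first by rewrite !hull_id.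
by exists C.
Qed.

Definition forest_meet F G : {set {set I}} :=
  [set X | (X != set0) && [exists E, [exists E', [&& E \in F, E' \in G, X == E :&: E',
                                       hull T X == hull T E & hull T X == hull T E']]]].

Lemma forest_meetP F G X : reflect (X != set0 /\ exists E E',
    [/\ E \in F, E' \in G, X = E :&: E', hull T X = hull T E & hull T X = hull T E'])
  (X \in forest_meet F G).
Proof.
rewrite inE; apply: (iffP andP) => [[X0 /existsP[E /existsP[E' /and5P[EF E'G]]]]|].
  by move=> /eqP eX /eqP XE /eqP XE'; split=> //; exists E, E'.
case=> X0 [E [E' [EF E'G eX XE XE']]].
split=> //; apply/existsP; exists E; apply/existsP; exists E'.
by apply/and5P; split=> //; apply/eqP.
Qed.

Lemma interval_subset_of_hull F E1 E2 x : in_interval T F -> E1 \in F -> E2 \in F ->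
  x \in E1 -> x \in E2 -> hull T E1 \subset hull T E2 -> E1 \subset E2.
Proof.
move=> hF E1F E2F xE1 xE2 le12; have [fF _] := hF; have [_ _ lamF _] := fF.
case: (lamF E1 E2 E1F E2F) => [//|E21|dis]; last by rewrite (disjointFr dis xE1) in xE2.
apply/negPn/negP => nE12.
have E21p : E2 \proper E1 by rewrite properE E21.
have := hullT_proper fF (interval_hull_injective hF) E2F E1F E21p.
by rewrite eqEsubset le12 hullT_mono ?(forest_neq0 fF E2F).
Qed.

Lemma setI_mem_forest_meet F G C C' : in_interval T F -> in_interval T G ->
  C \in F -> C' \in G -> C :&: C' != set0 -> C :&: C' \in forest_meet F G.
Proof.
move=> hF hG; move: {2}(#|C| + #|C'|) (leqnn (#|C| + #|C'|)) => n.
elim: n C C' => [|n IH] C C' size_n CF C'G X0.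
  by move: (subset_neq0 (subsetIl C C') X0); rewrite -card_gt0; case: #|C| size_n.
have [XC|XC] := eqVneq (hull T (C :&: C')) (hull T C).
  have [XC'|XC'] := eqVneq (hull T (C :&: C')) (hull T C').
    by apply/forest_meetP; split=> //; exists C, C'.
  have [A [AG AC' XA]] := interval_shrink hG C'G X0 (subsetIr C C') XC'.
  have eX : C :&: C' = C :&: A.
    by apply/eqP; rewrite eqEsubset subsetI subsetIl XA setIS ?proper_sub.
  rewrite eX; apply: IH => //; last by rewrite -eX.
  by rewrite -ltnS (leq_trans _ size_n) // -addnS leq_add2l proper_card.
have [A [AF AC XA]] := interval_shrink hF CF X0 (subsetIl C C') XC.
have eX : C :&: C' = A :&: C'.
  by apply/eqP; rewrite eqEsubset subsetI subsetIr XA setSI ?proper_sub.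
rewrite eX; apply: IH => //; last by rewrite -eX.
by rewrite -ltnS (leq_trans _ size_n) // -addSn leq_add2r proper_card.
Qed.

Section Meet.
Variables F G : {set {set I}}.
Hypotheses (interval_F : in_interval T F) (interval_G : in_interval T G).

Lemma forest_meet_laminar : laminar (forest_meet F G).
Proof.
have sub X1 X2 x : X1 \in forest_meet F G -> X2 \in forest_meet F G -> x \in X1 -> x \in X2 ->
    hull T X1 \subset hull T X2 -> X1 \subset X2.
  move=> /forest_meetP[_ [E1 [E1' [E1F E1'G eX1 X1E X1E']]]].
  move=> /forest_meetP[_ [E2 [E2' [E2F E2'G eX2 X2E X2E']]]] xX1 xX2 le12.
  have /setIP[xE1 xE1'] : x \in E1 :&: E1' by rewrite -eX1.
  have /setIP[xE2 xE2'] : x \in E2 :&: E2' by rewrite -eX2.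
  rewrite eX1 eX2; apply: setISS.
    by apply: (interval_subset_of_hull interval_F E1F E2F xE1 xE2); rewrite -X1E -X2E.
  by apply: (interval_subset_of_hull interval_G E1'G E2'G xE1' xE2'); rewrite -X1E' -X2E'.
move=> X1 X2 hX1 hX2.
have [/eqP|/set0Pn[x /setIP[xX1 xX2]]] := eqVneq (X1 :&: X2) set0.
  by rewrite setI_eq0 => dis; constructor 3.
have /forest_meetP[X10 _] := hX1; have /forest_meetP[X20 _] := hX2.
have [[_ _ lamT _] _] := tree_T.
case: (lamT _ _ (hullT_mem X10) (hullT_mem X20)) => [le12|le21|dis].
- by constructor 1; apply: sub hX1 hX2 xX1 xX2 le12.
- by constructor 2; apply: sub hX2 hX1 xX2 xX1 le21.
- move: (disjointFr dis (subsetP (sub_hullT X10) x xX1)).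
  by rewrite (subsetP (sub_hullT X20) x xX2).
Qed.

Lemma forest_meet_binary : binary_splits (forest_meet F G).
Proof.
move=> X hX X1; have /forest_meetP[X0 [E [E' [EF E'G eX XE XE']]]] := hX.
have [fF _] := interval_F.
have XsubE : X \subset E by rewrite eX subsetIl.
have [A [B spE]] := forest_splits fF EF (leq_trans X1 (subset_leq_card XsubE)).
have part A' B' : splits F E A' B' -> X :&: A' != set0 /\ X :&: A' \in forest_meet F G.
  move=> spE'; have [A'F B'F _ _ UE] := spE'.
  have XA' : X :&: A' = A' :&: E'.
    by rewrite eX setIC setIA (setIidPl (_ : A' \subset E)) // -UE subsetUl.
  suff XA'0 : X :&: A' != set0.
    by split=> //; rewrite XA' setI_mem_forest_meet // -XA'.
  apply/negP => /eqP XA'0.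
  have XB' : X \subset B' by rewrite -(setIidPl XsubE) -UE setIUr XA'0 set0U subsetIr.
  have B'E : B' \proper E := splits_proper (splits_sym spE').
  move: (hullT_proper fF (interval_hull_injective interval_F) B'F EF B'E).
  by rewrite eqEsubset hullT_mono ?(proper_sub B'E) ?(forest_neq0 fF B'F) //= -XE hullT_mono.
have [XA0 XAm] := part A B spE; have [XB0 XBm] := part B A (splits_sym spE).
have [_ _ _ dAB UE] := spE.
exists (X :&: A), (X :&: B); split=> //.
- by rewrite XA0 XB0.
- exact: disjointW (subsetIr X A) (subsetIr X B) dAB.
- by rewrite -setIUr UE; apply/setIidPl.
Qed.

Lemma forest_meet_forest : is_forest (forest_meet F G).
Proof.
split; [|move=> x|exact: forest_meet_laminar|exact: forest_meet_binary].
  by apply/negP => /forest_meetP[/eqP].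
have [[_ F1 _ _] _] := interval_F; have [[_ G1 _ _] _] := interval_G.
apply/forest_meetP; split; first by apply/set0Pn; exists x; rewrite inE.
by exists [set x], [set x]; split; rewrite ?setIid.
Qed.

Lemma forest_meet_hull_injective : hull_injective (forest_meet F G).
Proof.
move=> X1 X2 /andP[hX1 X1gt] /andP[hX2 X2gt] X12.
have /forest_meetP[_ [E1 [E1' [E1F E1'G eX1 X1E X1E']]]] := hX1.
have /forest_meetP[_ [E2 [E2' [E2F E2'G eX2 X2E X2E']]]] := hX2.
have inner_sup H E X : E \in H -> X \subset E -> 1 < #|X| -> inner H E.
  by move=> EH XE Xgt; rewrite /inner EH (leq_trans Xgt (subset_leq_card XE)).
have eE : E1 = E2.
  apply: (interval_hull_injective interval_F); last by rewrite -X1E -X2E X12.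
    by apply: (inner_sup _ _ X1) => //; rewrite eX1 subsetIl.
  by apply: (inner_sup _ _ X2) => //; rewrite eX2 subsetIl.
have eE' : E1' = E2'.
  apply: (interval_hull_injective interval_G); last by rewrite -X1E' -X2E' X12.
    by apply: (inner_sup _ _ X1) => //; rewrite eX1 subsetIr.
  by apply: (inner_sup _ _ X2) => //; rewrite eX2 subsetIr.
by rewrite eX1 eX2 eE eE'.
Qed.

Lemma forest_meet_interval : in_interval T (forest_meet F G).
Proof.
have [fT _] := tree_T; split; first exact: forest_meet_forest.
split; first exact/forest0_le/forest_meet_forest.
apply: refines_forest_le forest_meet_hull_injective _ => //; first exact: forest_meet_forest.
move=> X /forest_meetP[X0 _]; exists (hull T X).
by split; [exact: hullT_mem | exact: sub_hullT | rewrite hull_id ?hullT_mem].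
Qed.

Lemma forest_meet_le : forest_le (forest_meet F G) F /\ forest_le (forest_meet F G) G.
Proof.
have fM := forest_meet_forest; have [fF _] := interval_F; have [fG _] := interval_G.
split; apply: refines_forest_le forest_meet_hull_injective _ => //;
  move=> X /forest_meetP[_ [E [E' [EF E'G eX XE XE']]]].
  by exists E; split; rewrite // ?XE // eX subsetIl.
by exists E'; split; rewrite // ?XE' // eX subsetIr.
Qed.

Lemma forest_meet_max H : in_interval T H ->
  forest_le H F -> forest_le H G -> forest_le H (forest_meet F G).
Proof.
move=> hH HF HG; have [fH _] := hH.
apply: refines_forest_le (interval_hull_injective hH) _ => //; first exact: forest_meet_forest.
move=> C CH; have [K [KF CK KC]] := forest_le_refines hH interval_F HF CH.
have [K' [K'G CK' K'C]] := forest_le_refines hH interval_G HG CH.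
have C0 := forest_neq0 fH CH.
have CKK' : C \subset K :&: K' by rewrite subsetI CK CK'.
have KK'C : hull T (K :&: K') = hull T C := hullT_squeeze C0 CKK' (subsetIl K K') KC.
exists (K :&: K'); split=> //; apply/forest_meetP; split; first exact: subset_neq0 CKK' C0.
by exists K, K'; split; rewrite ?KK'C.
Qed.

End Meet.

End Interval.

End ForestIntervals.

Lemma lattice_of_meets (X : finType) (le : X -> X -> Prop) (P : X -> Prop) (top : X) :
  P top -> (forall a, P a -> le a top) ->
  (forall a b c, P a -> P b -> P c -> le a b -> le b c -> le a c) ->
  (forall a b, P a -> P b -> exists m, [/\ P m, le m a, le m b &
                                        forall l, P l -> le l a -> le l b -> le l m]) ->
  is_lattice_on le P.
Proof.
move=> Ptop le_top le_trans meet a b Pa Pb; split; last exact: meet.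
pose U u := [/\ P u, le a u & le b u].
have inf_U (s : seq X) : exists m, [/\ P m, forall u, u \in s -> U u -> le m u &
                          forall l, P l -> (forall u, u \in s -> U u -> le l u) -> le l m].
  elim: s => [|u s [m [Pm m_s max_m]]]; first by exists top; split=> // l Pl _; apply: le_top.
  have max_m_cons l : P l -> (forall v, v \in u :: s -> U v -> le l v) -> le l m.
    by move=> Pl l_us; apply: max_m => // v vs; apply: l_us; rewrite inE vs orbT.
  have [Uu|nUu] := classic (U u); last first.
    exists m; split=> // v; rewrite inE => /orP[/eqP-> /nUu[]|/m_s //].
  have [Pu _ _] := Uu; have [m' [Pm' m'u m'm max_m']] := meet u m Pu Pm.
  exists m'; split=> // [v|l Pl l_us].
    rewrite inE => /orP[/eqP-> //|vs [Pv av bv]].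
    exact: le_trans Pm' Pm Pv m'm (m_s v vs (And3 Pv av bv)).
  by apply: max_m' => //; [apply: l_us; rewrite ?inE ?eqxx | exact: max_m_cons].
have [j [Pj j_le max_j]] := inf_U (enum X).
exists j; split=> //.
- by apply: max_j => // u _ [].
- by apply: max_j => // u _ [].
- by move=> u Pu au bu; apply: j_le; rewrite ?mem_enum.
Qed.

Theorem theorem3p5 (I : finType) (T : {set {set I}}) :
  is_tree T -> is_lattice_on (@forest_le I) (in_interval T).
Proof.
move=> tree_T; apply: (lattice_of_meets (interval_top tree_T)).
- by move=> F [_ []].
- exact: interval_forest_le_trans.
- move=> F G hF hG; exists (forest_meet T F G).
  have [FGF FGG] := forest_meet_le tree_T hF hG.
  split=> //; first exact: forest_meet_interval.
  by move=> H hH; apply: forest_meet_max.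
Qed.
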